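(* Let $\tau$ be a $\sigma$-maxitive measure on a $\sigma$-algebra $\mathcal{B}$ on a nonempty set $E$. The following conditions are equivalent: 1. $\tau$ is $\sigma$-principal; 2. $\tau$ satisfies the countable chain condition; 3. the quotient space $\mathcal{B}/\tau$ is $\sigma$-principal, i.e. every $\sigma$-ideal of the $\sigma$-complete lattice $\mathcal{B}/\tau$ is a principal ideal; 4. there is a $\sigma$-principal $\sigma$-additive measure $m$ on $\mathcal{B}$ such that, for all $B\in\mathcal{B}$, $m(B)=0$ if and only if $\tau(B)=0$.
   Context: A $\sigma$-maxitive measure on $\mathcal{B}$ is a map $\tau:\mathcal{B}\to[0,\infty]$ with $\tau(\emptyset)=0$ and $\tau(\bigcup_j B_j)=\sup_j\tau(B_j)$ for every countable family $(B_j)$ in $\mathcal{B}$. A set $N\subset E$ is $\tau$-negligible if $N\subset B$ for some $B\in\mathcal{B}$ with $\tau(B)=0$; analogously for $m$. A $\sigma$-ideal of $\mathcal{B}$ is a nonempty subfamily closed under countable unions and such that $A\subset B\in\mathcal{I}$ with $A\in\mathcal{B}$ implies $A\in\mathcal{I}$. A monotone set function $\mu$ on $\mathcal{B}$ is $\sigma$-principal if for every $\sigma$-ideal $\mathcal{I}$ of $\mathcal{B}$ there is $L\in\mathcal{I}$ such that $S\setminus L$ is $\mu$-negligible for all $S\in\mathcal{I}$. $\tau$ satisfies the countable chain condition if every family of pairwise disjoint, non-$\tau$-negligible elements of $\mathcal{B}$ is countable. Quotient space: on $\mathcal{B}$ put $A\sim B$ if $A\cup N=B\cup N$ for some $\tau$-negligible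 $N$. Write $B^\tau$ for the class of $B$ and $\mathcal{B}/\tau$ for the set of classes, ordered by $A^\tau\le B^\tau$ iff $A\subset B\cup N$ for some $\tau$-negligible $N$; this is a $\sigma$-complete lattice. A $\sigma$-ideal of $\mathcal{B}/\tau$ is a nonempty down-closed subset closed under countable suprema. It is principal if it equals $\{x: x\le L^\tau\}$ for some $L$. *)

From Stdlib Require Import Reals.
Open Scope R_scope.
Set Implicit Arguments.

(** Extended nonnegative-valued reals [0, oo] (nonnegativity is imposed
    separately on the set functions). *)
Inductive ereal : Type := EFin (r : R) | EInf.

Definition ele (a b : ereal) : Prop :=
  match a, b with
  | EFin x, EFin y => x <= y
  | _, EInf => True
  | EInf, EFin _ => False
  end.

Definition eadd (a b : ereal) : ereal :=
  match a, b with
  | EFin x, EFin y => EFin (x + y)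
  | _, _ => EInf
  end.

Definition ezero : ereal := EFin 0.

Definition is_esup (f : nat -> ereal) (s : ereal) : Prop :=
  (forall n, ele (f n) s) /\ (forall u, (forall n, ele (f n) u) -> ele s u).

Fixpoint epsum (f : nat -> ereal) (n : nat) : ereal :=
  match n with
  | O => ezero
  | S k => eadd (epsum f k) (f k)
  end.

Definition is_esum (f : nat -> ereal) (s : ereal) : Prop := is_esup (epsum f) s.

Definition set0 {E : Type} : E -> Prop := fun _ => False.
Definition bigcup {E : Type} (F : nat -> E -> Prop) : E -> Prop :=
  fun x => exists n, F n x.
Definition subset {E : Type} (A C : E -> Prop) : Prop := forall x, A x -> C x.

Definition sigma_algebra {E : Type} (B : (E -> Prop) -> Prop) : Prop :=
  B set0 /\
  (forall A, B A -> B (fun x => ~ A x)) /\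
  (forall F : nat -> E -> Prop, (forall n, B (F n)) -> B (bigcup F)).

Definition sigma_maxitive {E : Type} (B : (E -> Prop) -> Prop)
  (tau : (E -> Prop) -> ereal) : Prop :=
  tau set0 = ezero /\
  (forall A, B A -> ele ezero (tau A)) /\
  (forall F : nat -> E -> Prop, (forall n, B (F n)) ->
     is_esup (fun n => tau (F n)) (tau (bigcup F))).

Definition sigma_additive {E : Type} (B : (E -> Prop) -> Prop)
  (m : (E -> Prop) -> ereal) : Prop :=
  m set0 = ezero /\
  (forall A, B A -> ele ezero (m A)) /\
  (forall F : nat -> E -> Prop, (forall n, B (F n)) ->
     (forall i j, i <> j -> forall x, ~ (F i x /\ F j x)) ->
     is_esum (fun n => m (F n)) (m (bigcup F))).

Definition negligible {E : Type} (B : (E -> Prop) -> Prop)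
  (mu : (E -> Prop) -> ereal) (N : E -> Prop) : Prop :=
  exists C, B C /\ subset N C /\ mu C = ezero.

Definition sigma_ideal {E : Type} (B : (E -> Prop) -> Prop)
  (I : (E -> Prop) -> Prop) : Prop :=
  (forall A, I A -> B A) /\
  (exists A, I A) /\
  (forall F : nat -> E -> Prop, (forall n, I (F n)) -> I (bigcup F)) /\
  (forall A C, B A -> subset A C -> I C -> I A).

Definition sigma_principal {E : Type} (B : (E -> Prop) -> Prop)
  (mu : (E -> Prop) -> ereal) : Prop :=
  forall I, sigma_ideal B I ->
    exists L, I L /\
      forall S, I S -> negligible B mu (fun x => S x /\ ~ L x).

Definition countable_family {E : Type} (Fam : (E -> Prop) -> Prop) : Prop :=
  exists g : nat -> (E -> Prop), forall A, Fam A -> exists n, g n = A.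

Definition ccc {E : Type} (B : (E -> Prop) -> Prop)
  (tau : (E -> Prop) -> ereal) : Prop :=
  forall Fam : (E -> Prop) -> Prop,
    (forall A, Fam A -> B A /\ ~ negligible B tau A) ->
    (forall A C, Fam A -> Fam C -> A <> C -> forall x, ~ (A x /\ C x)) ->
    countable_family Fam.

Definition tequiv {E : Type} (B : (E -> Prop) -> Prop)
  (tau : (E -> Prop) -> ereal) (A C : E -> Prop) : Prop :=
  exists N, negligible B tau N /\ forall x, (A x \/ N x) <-> (C x \/ N x).

Definition tcls {E : Type} (B : (E -> Prop) -> Prop)
  (tau : (E -> Prop) -> ereal) (A : E -> Prop) : (E -> Prop) -> Prop :=
  fun C => B C /\ tequiv B tau A C.

Definition quot {E : Type} (B : (E -> Prop) -> Prop)
  (tau : (E -> Prop) -> ereal) : Type :=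
  { P : (E -> Prop) -> Prop | exists A, B A /\ P = tcls B tau A }.

Definition qle {E : Type} {B : (E -> Prop) -> Prop}
  {tau : (E -> Prop) -> ereal} (p q : quot B tau) : Prop :=
  exists A C, proj1_sig p A /\ proj1_sig q C /\
    exists N, negligible B tau N /\ forall x, A x -> C x \/ N x.

Definition is_lub_seq {T : Type} (le : T -> T -> Prop) (f : nat -> T) (s : T) : Prop :=
  (forall n, le (f n) s) /\ (forall u, (forall n, le (f n) u) -> le s u).

Definition order_sigma_ideal {T : Type} (le : T -> T -> Prop) (I : T -> Prop) : Prop :=
  (exists x, I x) /\
  (forall x y, le x y -> I y -> I x) /\
  (forall (f : nat -> T) s, (forall n, I (f n)) -> is_lub_seq le f s -> I s).

Definition order_principal {T : Type} (le : T -> T -> Prop) (I : T -> Prop) : Prop :=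
  exists l, forall x, I x <-> le x l.

Definition quot_sigma_principal {E : Type} (B : (E -> Prop) -> Prop)
  (tau : (E -> Prop) -> ereal) : Prop :=
  forall I : quot B tau -> Prop,
    order_sigma_ideal (@qle E B tau) I -> order_principal (@qle E B tau) I.

(** Everything is phrased through tau-null sets.  The negligible sets of a
    sigma-maxitive tau form a sigma-ideal, so "A is almost contained in C"
    ([ae_subset]: A minus C is negligible) is a preorder closed under
    countable unions; the quotient B/tau is exactly B ordered by [ae_subset].

    - (1) <-> (4): a set function only matters through its null sets.  The
      0/oo-valued "null indicator" of tau is sigma-additive and has the same
      null sets as tau, and sigma-principality transfers between set
      functions with the same null sets.
    - (1) -> (2): the sets covered by countably many members of a disjoint
      family form a sigma-ideal; its principal element is covered by a
      countable subfamily, outside of which every member must be negligible.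
    - (2) -> (1): by Zorn's lemma an ideal contains a maximal disjoint family
      of non-negligible sets; by ccc it is countable, and its union is a
      principal element.
    - (1) <-> (3): sigma-ideals of B and of B/tau correspond to each other by
      taking classes of members and members of classes. *)

From Stdlib Require Import Reals Lra Classical ClassicalEpsilon
  FunctionalExtensionality PropExtensionality Cantor.
From mathcomp Require classical_sets.

Lemma esup_of_zeros (f : nat -> ereal) s :
  is_esup f s -> (forall n, f n = ezero) -> s = ezero.
Proof.
  intros [Hub Hlub] Hf.
  assert (Hle : ele s ezero) by (apply Hlub; intro n; rewrite Hf; simpl; lra).
  assert (Hge : ele ezero s) by (rewrite <- (Hf 0%nat); apply Hub).
  destruct s as [r|]; simpl in *; [|contradiction].
  unfold ezero; f_equal; lra.
Qed.

Lemma esup_zero_terms (f : nat -> ereal) s n :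
  is_esup f s -> s = ezero -> (forall k, ele ezero (f k)) -> f n = ezero.
Proof.
  intros [Hub _] Hs Hnn. specialize (Hub n). specialize (Hnn n). rewrite Hs in Hub.
  destruct (f n) as [r|]; simpl in *; [|contradiction].
  unfold ezero; f_equal; lra.
Qed.

Lemma epsum_of_zeros (f : nat -> ereal) n :
  (forall k, f k = ezero) -> epsum f n = ezero.
Proof.
  intro Hf. induction n as [|n IH]; simpl; [reflexivity|].
  rewrite IH, Hf. unfold ezero; simpl; f_equal; lra.
Qed.

Lemma sigma_algebra_ext {E : Type} (B : (E -> Prop) -> Prop) (A C : E -> Prop) :
  B A -> (forall x, A x <-> C x) -> B C.
Proof.
  intros HA HAC.
  replace C with A; [exact HA|].
  apply functional_extensionality; intro x.
  apply propositional_extensionality, HAC.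
Qed.

(** A sigma-algebra is closed under differences: A \ C is the complement of
    (~A) u C. *)
Lemma sigma_algebra_diff {E : Type} (B : (E -> Prop) -> Prop) (A C : E -> Prop) :
  sigma_algebra B -> B A -> B C -> B (fun x => A x /\ ~ C x).
Proof.
  intros [_ [Hcompl Hunion]] HA HC.
  set (F := fun n : nat => match n with O => fun x => ~ A x | _ => C end).
  assert (HF : B (bigcup F)) by (apply Hunion; intros [|n]; simpl; auto).
  apply (sigma_algebra_ext B _ _ (Hcompl _ HF)).
  intro x; unfold bigcup, F; split.
  - intro Hx. split.
    + apply NNPP; intro HnA. apply Hx. exists 0%nat. exact HnA.
    + intro Hc. apply Hx. exists 1%nat. exact Hc.
  - intros [Ha Hc] [[|n] Hn]; auto.
Qed.

Section Negligibility.

Variables (E : Type) (B : (E -> Prop) -> Prop).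

Lemma negligible_mono (mu : (E -> Prop) -> ereal) (N M : E -> Prop) :
  negligible B mu M -> subset N M -> negligible B mu N.
Proof.
  intros [C [HC [HMC Hmu]]] HNM. exists C. unfold subset in *. auto.
Qed.

(** Set functions with the same null sets on B have the same negligible sets,
    hence sigma-principality is shared. *)
Lemma sigma_principal_transfer (mu nu : (E -> Prop) -> ereal) :
  (forall A, B A -> (mu A = ezero <-> nu A = ezero)) ->
  sigma_principal B mu -> sigma_principal B nu.
Proof.
  intros Hnull Hmu I HI.
  destruct (Hmu I HI) as [L [HL HS]].
  exists L; split; [exact HL|].
  intros S HIS. destruct (HS S HIS) as [C [HC [Hsub Hzero]]].
  exists C. repeat split; auto. apply Hnull; auto.
Qed.

End Negligibility.

Arguments negligible_mono {E B mu N} M.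

(** * The null sets of a sigma-maxitive measure *)

Section MaxitiveNullSets.

Variables (E : Type) (B : (E -> Prop) -> Prop) (tau : (E -> Prop) -> ereal).
Hypotheses (HB : sigma_algebra B) (Htau : sigma_maxitive B tau).

Lemma negligible_set0 : negligible B tau set0.
Proof.
  exists set0. split; [apply HB|]. split; [intros x Hx; exact Hx|]. apply Htau.
Qed.

(** Countable unions of negligible sets are negligible: this is where
    maxitivity is used. *)
Lemma negligible_bigcup (N : nat -> E -> Prop) :
  (forall n, negligible B tau (N n)) -> negligible B tau (bigcup N).
Proof.
  intro HN.
  destruct (choice (fun n C => B C /\ subset (N n) C /\ tau C = ezero) HN) as [g Hg].
  assert (HBg : forall n, B (g n)) by (intro n; apply Hg).
  exists (bigcup g). split; [apply HB, HBg|]. split.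
  - intros x [n Hx]. exists n. apply (Hg n), Hx.
  - apply (esup_of_zeros _ _ (proj2 (proj2 Htau) g HBg)). intro n. apply Hg.
Qed.

Lemma negligible_union (N M : E -> Prop) :
  negligible B tau N -> negligible B tau M -> negligible B tau (fun x => N x \/ M x).
Proof.
  intros HN HM.
  apply (negligible_mono (bigcup (fun n => match n with O => N | _ => M end))).
  - apply negligible_bigcup. intros [|n]; assumption.
  - intros x [Hx|Hx]; [exists 0%nat|exists 1%nat]; exact Hx.
Qed.

(** [A] is almost contained in [C]: the difference A \ C is negligible.
    This is the order of the quotient B/tau. *)
Definition ae_subset (A C : E -> Prop) : Prop :=
  negligible B tau (fun x => A x /\ ~ C x).

Lemma ae_subset_of_subset (A C : E -> Prop) : subset A C -> ae_subset A C.
Proof.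
  intro HAC. apply (negligible_mono set0 negligible_set0).
  intros x [HA HnC]. exact (HnC (HAC x HA)).
Qed.

Lemma ae_subset_refl (A : E -> Prop) : ae_subset A A.
Proof. apply ae_subset_of_subset. intros x Hx; exact Hx. Qed.

Lemma ae_subset_trans (A C D : E -> Prop) :
  ae_subset A C -> ae_subset C D -> ae_subset A D.
Proof.
  intros HAC HCD.
  apply (negligible_mono _ (negligible_union _ _ HAC HCD)).
  intros x [HA HnD]. destruct (classic (C x)); auto.
Qed.

Lemma ae_subset_bigcup (F : nat -> E -> Prop) (C : E -> Prop) :
  (forall n, ae_subset (F n) C) -> ae_subset (bigcup F) C.
Proof.
  intro HF.
  apply (negligible_mono _ (negligible_bigcup _ HF)).
  intros x [[n Hn] HnC]. exists n. auto.
Qed.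

Lemma ae_subset_intro (A C N : E -> Prop) :
  negligible B tau N -> (forall x, A x -> C x \/ N x) -> ae_subset A C.
Proof.
  intros HN HAC. apply (negligible_mono _ HN).
  intros x [HA HnC]. destruct (HAC x HA); tauto.
Qed.

End MaxitiveNullSets.

Arguments negligible_set0 {E B tau}.
Arguments negligible_union {E B tau} HB Htau N M.
Arguments ae_subset {E} B tau A C.
Arguments ae_subset_of_subset {E} B tau HB Htau A C.
Arguments ae_subset_refl {E} B tau HB Htau A.
Arguments ae_subset_trans {E} B tau HB Htau A C D.
Arguments ae_subset_bigcup {E} B tau HB Htau F C.
Arguments ae_subset_intro {E} B tau A C N.

(** * (1) <-> (4): the 0/oo measure with the null sets of tau *)

Definition null_indicator {E : Type} (tau : (E -> Prop) -> ereal)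
  (A : E -> Prop) : ereal :=
  if excluded_middle_informative (tau A = ezero) then ezero else EInf.

Lemma null_indicator_zero {E : Type} (tau : (E -> Prop) -> ereal) (A : E -> Prop) :
  null_indicator tau A = ezero <-> tau A = ezero.
Proof.
  unfold null_indicator.
  destruct (excluded_middle_informative (tau A = ezero)); split; auto.
  - intro H; discriminate H.
  - intro H; contradiction.
Qed.

Lemma null_indicator_infinite {E : Type} (tau : (E -> Prop) -> ereal) (A : E -> Prop) :
  tau A <> ezero -> null_indicator tau A = EInf.
Proof.
  intro H. unfold null_indicator.
  destruct (excluded_middle_informative (tau A = ezero)); [contradiction|reflexivity].
Qed.

(** The null indicator of a sigma-maxitive measure is sigma-additive (even
    without disjointness): a countable union is null iff every piece is. *)
Lemma null_indicator_sigma_additive {E : Type} (B : (E -> Prop) -> Prop)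
  (tau : (E -> Prop) -> ereal) :
  sigma_maxitive B tau -> sigma_additive B (null_indicator tau).
Proof.
  intros [Htau0 [Hnn Hsup]]. split; [|split].
  - apply null_indicator_zero, Htau0.
  - intros A _. unfold null_indicator.
    destruct (excluded_middle_informative _); simpl; [lra|exact I].
  - intros F HF _. specialize (Hsup F HF).
    destruct (classic (tau (bigcup F) = ezero)) as [Hnull|Hpos].
    + assert (Hpieces : forall n, null_indicator tau (F n) = ezero).
      { intro n. apply null_indicator_zero.
        apply (esup_zero_terms _ _ n Hsup Hnull). intro k. apply Hnn, HF. }
      rewrite (proj2 (null_indicator_zero tau _) Hnull).
      split.
      * intro n. rewrite epsum_of_zeros by exact Hpieces. simpl. lra.
      * intros u Hu. exact (Hu 0%nat).
    + assert (Hpiece : exists n, tau (F n) <> ezero).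
      { apply NNPP; intro Hnone. apply Hpos, (esup_of_zeros _ _ Hsup).
        intro n. apply NNPP; intro Hn. apply Hnone. exists n; exact Hn. }
      destruct Hpiece as [n Hn].
      rewrite (null_indicator_infinite _ _ Hpos). split.
      * intro k. destruct (epsum _ k); exact I.
      * intros u Hu. specialize (Hu (S n)). simpl in Hu.
        rewrite (null_indicator_infinite _ _ Hn) in Hu.
        destruct (epsum _ n); exact Hu.
Qed.

Lemma sigma_principal_iff_additive_version {E : Type} (B : (E -> Prop) -> Prop)
  (tau : (E -> Prop) -> ereal) :
  sigma_maxitive B tau ->
  (sigma_principal B tau <->
     exists m : (E -> Prop) -> ereal,
       sigma_additive B m /\ sigma_principal B m /\
       forall A, B A -> (m A = ezero <-> tau A = ezero)).
Proof.
  intro Htau. split.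
  - intro Hp. exists (null_indicator tau). split; [|split].
    + apply (null_indicator_sigma_additive B), Htau.
    + apply (sigma_principal_transfer _ _ tau); [|exact Hp].
      intros A _. symmetry. apply null_indicator_zero.
    + intros A _. apply null_indicator_zero.
  - intros [m [_ [Hp Hnull]]]. exact (sigma_principal_transfer _ _ m _ Hnull Hp).
Qed.

(** * (1) <-> (2): sigma-principality and the countable chain condition *)

Section ChainCondition.

Variables (E : Type) (B : (E -> Prop) -> Prop) (tau : (E -> Prop) -> ereal).
Hypotheses (HB : sigma_algebra B) (Htau : sigma_maxitive B tau).

(** [A] is covered by countably many members of [Fam]; [set0] is allowed as
    a filler so that the empty family needs no special treatment. *)
Definition countably_covered (Fam : (E -> Prop) -> Prop) (A : E -> Prop) : Prop :=
  B A /\ exists g : nat -> E -> Prop,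
    (forall n, Fam (g n) \/ g n = set0) /\ subset A (bigcup g).

Lemma countably_covered_sigma_ideal (Fam : (E -> Prop) -> Prop) :
  sigma_ideal B (countably_covered Fam).
Proof.
  split; [|split; [|split]].
  - intros A [HA _]. exact HA.
  - exists set0. split; [apply HB|]. exists (fun _ => set0).
    split; [auto|]. intros x Hx; destruct Hx.
  - intros F HF. split; [apply HB; intro n; apply HF|].
    destruct (choice (fun n g => (forall k, Fam (g k) \/ g k = set0) /\
                                 subset (F n) (bigcup g)) (fun n => proj2 (HF n)))
      as [G HG].
    (* merge the countably many countable covers along a pairing of nat *)
    exists (fun m => let (k, j) := of_nat m in G k j). split.
    + intro m. destruct (of_nat m) as [k j]. apply HG.
    + intros x [k Hx]. destruct (proj2 (HG k) x Hx) as [j Hj].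
      exists (to_nat (k, j)). rewrite cancel_of_to. exact Hj.
  - intros A C HA HAC [_ [g [Hg HC]]]. split; [exact HA|].
    exists g. split; [exact Hg|]. intros x Hx. apply HC, HAC, Hx.
Qed.

(** This direction holds for any set function tau: a disjoint family of
    non-negligible sets is listed by the countable cover of the principal
    element of the ideal of countably covered sets. *)
Lemma sigma_principal_ccc : sigma_principal B tau -> ccc B tau.
Proof.
  intros Hp Fam HFam Hdisj.
  destruct (Hp _ (countably_covered_sigma_ideal Fam)) as [L [[_ [g [Hg HL]]] HS]].
  exists g. intros F HF. apply NNPP; intro Hnot_listed.
  assert (HFcov : countably_covered Fam F).
  { split; [apply HFam, HF|]. exists (fun _ => F).
    split; [auto|]. intros x Hx. exists 0%nat; exact Hx. }
  (* F misses every g n, hence misses L, so F = F \ L is negligible *)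
  apply (proj2 (HFam F HF)).
  apply (negligible_mono _ (HS F HFcov)).
  intros x Hx. split; [exact Hx|]. intro HLx.
  destruct (HL x HLx) as [n Hgn].
  destruct (Hg n) as [Hfam|Hempty].
  - apply (Hdisj F (g n) HF Hfam) with x.
    + intro Heq. apply Hnot_listed. exists n. symmetry; exact Heq.
    + split; assumption.
  - rewrite Hempty in Hgn. exact Hgn.
Qed.

Definition disjoint_family (I : (E -> Prop) -> Prop) (M : (E -> Prop) -> Prop) : Prop :=
  (forall A, M A -> I A /\ ~ negligible B tau A) /\
  (forall A C, M A -> M C -> A <> C -> forall x, ~ (A x /\ C x)).

(** Zorn's lemma, through the library's maximal disjoint subcollections. *)
Lemma exists_maximal_disjoint_family (I : (E -> Prop) -> Prop) :
  exists M, disjoint_family I M /\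
    forall S, disjoint_family I (fun A => M A \/ A = S) -> M S.
Proof.
  destruct (classical_sets.ex_maximal_disjoint_subcollection (fun A : E -> Prop => A)
              (fun A => I A /\ ~ negligible B tau A)) as [M [HMD HMtriv HMmax]].
  exists M. split.
  - split; [exact HMD|].
    intros A C HA HC HAC x Hx. apply HAC, (HMtriv A C HA HC). exists x; exact Hx.
  - intros S [HSD HStriv]. apply NNPP; intro HnS.
    apply (HMmax (fun A => M A \/ A = S)).
    + split; [intros A HA; left; exact HA|].
      intro Hsub. apply HnS, Hsub. right; reflexivity.
    + exact HSD.
    + intros A C HA HC [x Hx]. apply NNPP; intro HAC. exact (HStriv A C HA HC HAC x Hx).
Qed.

(** A member of [I] disjoint from every set of a maximal disjoint family is
    negligible: otherwise it could be added to the family. *)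
Lemma disjoint_from_maximal_negligible (I M : (E -> Prop) -> Prop) (S : E -> Prop) :
  disjoint_family I M ->
  (forall S, disjoint_family I (fun A => M A \/ A = S) -> M S) ->
  I S -> (forall A, M A -> forall x, ~ (A x /\ S x)) -> negligible B tau S.
Proof.
  intros [HM1 HM2] Hmax HIS Hdisj. apply NNPP; intro HSpos.
  assert (HMS : M S).
  { apply Hmax. split.
    - intros A [HA| ->]; [exact (HM1 A HA)|split; assumption].
    - intros A C [HA| ->] [HC| ->] HAC x; auto.
      intros [HSx HCx]. exact (Hdisj C HC x (conj HCx HSx)). }
  apply HSpos, (negligible_mono set0 (negligible_set0 HB Htau)).
  intros x Hx. exact (Hdisj S HMS x (conj Hx Hx)).
Qed.

Lemma ccc_sigma_principal : ccc B tau -> sigma_principal B tau.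
Proof.
  intros Hccc I [HIB [[A0 HA0] [HIunion HIdown]]].
  destruct (exists_maximal_disjoint_family I) as [M [HM Hmax]].
  destruct (Hccc M) as [g Hg].
  { intros A HA. destruct (proj1 HM A HA). split; [apply HIB|]; assumption. }
  { exact (proj2 HM). }
  (* the members of M, listed along g, with non-members replaced by set0 *)
  set (h := fun n => if excluded_middle_informative (M (g n)) then g n else set0).
  assert (HhM : forall A, M A -> exists n, h n = A).
  { intros A HA. destruct (Hg A HA) as [n Hn]. exists n. unfold h.
    destruct (excluded_middle_informative _) as [_|Hn']; [exact Hn|].
    rewrite Hn in Hn'. contradiction. }
  assert (HIh : forall n, I (h n)).
  { intro n. unfold h. destruct (excluded_middle_informative _) as [HMn|_].
    - apply (proj1 HM), HMn.
    - apply (HIdown set0 A0); [apply HB|intros x []|exact HA0]. }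
  exists (bigcup h). split; [apply HIunion, HIh|].
  intros S HIS.
  apply (disjoint_from_maximal_negligible I M _ HM Hmax).
  - apply (HIdown _ S); [|intros x [Hx _]; exact Hx|exact HIS].
    apply sigma_algebra_diff; [exact HB|apply HIB, HIS|apply HIB, HIunion, HIh].
  - intros A HA x [HAx [_ HnL]]. destruct (HhM A HA) as [n Hn].
    apply HnL. exists n. rewrite Hn. exact HAx.
Qed.

End ChainCondition.

(** * (1) <-> (3): sigma-ideals of B and of the quotient B/tau *)

Section Quotient.

Variables (E : Type) (B : (E -> Prop) -> Prop) (tau : (E -> Prop) -> ereal).
Hypotheses (HB : sigma_algebra B) (Htau : sigma_maxitive B tau).

Notation ae_subset := (ae_subset B tau).

Definition class_of (A : E -> Prop) (HA : B A) : quot B tau :=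
  exist _ (tcls B tau A) (ex_intro _ A (conj HA eq_refl)).

Lemma class_of_mem (A : E -> Prop) (HA : B A) : proj1_sig (class_of A HA) A.
Proof.
  split; [exact HA|]. exists set0. split; [exact (negligible_set0 HB Htau)|tauto].
Qed.

Lemma quot_mem_B (p : quot B tau) (A : E -> Prop) : proj1_sig p A -> B A.
Proof. destruct p as [P [A0 [HA0 HP]]]; simpl; subst P. intros [HA _]. exact HA. Qed.

Lemma quot_inhabited (p : quot B tau) : exists A, proj1_sig p A.
Proof. destruct p as [P [A0 [HA0 HP]]]; simpl; subst P. exists A0. apply (class_of_mem A0 HA0). Qed.

Lemma quot_mem_ae (p : quot B tau) (A C : E -> Prop) :
  proj1_sig p A -> proj1_sig p C -> ae_subset A C.
Proof.
  destruct p as [P [A0 [HA0 HP]]]; simpl; subst P. intros [_ [N1 [HN1 Heq1]]] [_ [N2 [HN2 Heq2]]].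
  apply (ae_subset_intro B tau A C (fun x => N1 x \/ N2 x));
    [apply negligible_union; assumption|].
  intros x HA. destruct (proj2 (Heq1 x) (or_introl HA)) as [HA0x|]; [|tauto].
  destruct (proj1 (Heq2 x) (or_introl HA0x)); tauto.
Qed.

Lemma qle_ae_subset (p q : quot B tau) (A C : E -> Prop) :
  qle p q -> proj1_sig p A -> proj1_sig q C -> ae_subset A C.
Proof.
  intros [A1 [C1 [HA1 [HC1 [N [HN HAC]]]]]] HA HC.
  apply (ae_subset_trans B tau HB Htau _ A1); [exact (quot_mem_ae p A A1 HA HA1)|].
  apply (ae_subset_trans B tau HB Htau _ C1); [|exact (quot_mem_ae q C1 C HC1 HC)].
  exact (ae_subset_intro B tau _ _ _ HN HAC).
Qed.

Lemma qle_of_ae_subset (p q : quot B tau) (A C : E -> Prop) :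
  proj1_sig p A -> proj1_sig q C -> ae_subset A C -> qle p q.
Proof.
  intros HA HC HAC. exists A, C. repeat split; [exact HA|exact HC|].
  exists (fun x => A x /\ ~ C x). split; [exact HAC|].
  intros x Hx. destruct (classic (C x)); tauto.
Qed.

Lemma qle_class (A C : E -> Prop) (HA : B A) (HC : B C) :
  qle (class_of A HA) (class_of C HC) <-> ae_subset A C.
Proof.
  split.
  - intro Hle. exact (qle_ae_subset _ _ _ _ Hle (class_of_mem A HA) (class_of_mem C HC)).
  - apply qle_of_ae_subset; apply class_of_mem.
Qed.

Lemma class_bigcup_lub (F : nat -> E -> Prop) (HF : forall n, B (F n)) (HU : B (bigcup F)) :
  is_lub_seq qle (fun n => class_of (F n) (HF n)) (class_of (bigcup F) HU).
Proof.
  split.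
  - intro n. apply qle_class, ae_subset_of_subset; [exact HB|exact Htau|].
    intros x Hx. exists n; exact Hx.
  - intros u Hu. destruct (quot_inhabited u) as [C HC].
    apply (qle_of_ae_subset _ _ _ C (class_of_mem _ HU) HC).
    apply (ae_subset_bigcup B tau HB Htau). intro n.
    exact (qle_ae_subset _ _ _ _ (Hu n) (class_of_mem _ (HF n)) HC).
Qed.

Definition members_of (I : quot B tau -> Prop) (A : E -> Prop) : Prop :=
  exists p, I p /\ proj1_sig p A.

Lemma members_of_class (I : quot B tau -> Prop) (A : E -> Prop) (HA : B A) :
  order_sigma_ideal qle I -> members_of I A -> I (class_of A HA).
Proof.
  intros [_ [Hdown _]] [p [HIp HpA]]. apply (Hdown _ p); [|exact HIp].
  apply (qle_of_ae_subset _ _ A A (class_of_mem A HA) HpA), ae_subset_refl; assumption.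
Qed.

Lemma members_of_sigma_ideal (I : quot B tau -> Prop) :
  order_sigma_ideal qle I -> sigma_ideal B (members_of I).
Proof.
  intro HI. pose proof HI as [[p0 HIp0] [Hdown Hlub]].
  split; [|split; [|split]].
  - intros A [p [_ HpA]]. exact (quot_mem_B p A HpA).
  - destruct (quot_inhabited p0) as [A HA]. exists A, p0. split; assumption.
  - intros F HF.
    assert (HBF : forall n, B (F n)).
    { intro n. destruct (HF n) as [p [_ Hp]]. exact (quot_mem_B p _ Hp). }
    assert (HU : B (bigcup F)) by (apply HB, HBF).
    exists (class_of _ HU). split; [|apply class_of_mem].
    apply (Hlub _ _ (fun n => members_of_class I (F n) (HBF n) HI (HF n))).
    apply class_bigcup_lub.
  - intros A C HA HAC [p [HIp HpC]]. exists (class_of A HA). split; [|apply class_of_mem].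
    apply (Hdown _ p); [|exact HIp].
    apply (qle_of_ae_subset _ _ A C (class_of_mem A HA) HpC).
    apply ae_subset_of_subset; assumption.
Qed.

Lemma sigma_principal_quot : sigma_principal B tau -> quot_sigma_principal B tau.
Proof.
  intros Hp I HI.
  destruct (Hp _ (members_of_sigma_ideal I HI)) as [L [HL HS]].
  pose proof (proj1 (members_of_sigma_ideal I HI) L HL) as HBL.
  exists (class_of L HBL). intro p. split.
  - intro HIp. destruct (quot_inhabited p) as [A HA].
    apply (qle_of_ae_subset _ _ A L HA (class_of_mem L HBL)).
    apply HS. exists p. split; assumption.
  - intro Hle. apply (proj1 (proj2 HI) _ (class_of L HBL) Hle).
    apply members_of_class; assumption.
Qed.

Definition classes_below (I : (E -> Prop) -> Prop) (p : quot B tau) : Prop :=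
  exists A C, proj1_sig p A /\ I C /\ ae_subset A C.

Lemma classes_below_class (I : (E -> Prop) -> Prop) (C : E -> Prop) (HC : B C) :
  I C -> classes_below I (class_of C HC).
Proof.
  intro HIC. exists C, C. split; [apply class_of_mem|]. split; [exact HIC|].
  apply ae_subset_refl; assumption.
Qed.

Lemma classes_below_sigma_ideal (I : (E -> Prop) -> Prop) :
  sigma_ideal B I -> order_sigma_ideal qle (classes_below I).
Proof.
  intros [HIB [[A0 HIA0] [HIunion _]]]. split; [|split].
  - exists (class_of A0 (HIB A0 HIA0)). apply classes_below_class, HIA0.
  - intros p q Hpq [A [C [HqA [HIC HAC]]]].
    destruct (quot_inhabited p) as [D HpD]. exists D, C. repeat split; auto.
    apply (ae_subset_trans B tau HB Htau _ A); [|exact HAC].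
    exact (qle_ae_subset _ _ _ _ Hpq HpD HqA).
  - intros f s Hf [_ Hlub].
    assert (Hcover : forall n, exists C, I C /\ exists A, proj1_sig (f n) A /\ ae_subset A C).
    { intro n. destruct (Hf n) as [A [C [HA [HIC HAC]]]].
      exists C. split; [exact HIC|]. exists A. split; assumption. }
    destruct (choice _ Hcover) as [Cs HCs].
    assert (HIU : I (bigcup Cs)) by (apply HIunion; intro n; apply HCs).
    destruct (quot_inhabited s) as [S HsS].
    exists S, (bigcup Cs). repeat split; auto.
    apply (qle_ae_subset s (class_of _ (HIB _ HIU))); [|exact HsS|apply class_of_mem].
    apply Hlub. intro n. destruct (HCs n) as [_ [A [HA HAC]]].
    apply (qle_of_ae_subset _ _ A _ HA (class_of_mem _ _)).
    apply (ae_subset_trans B tau HB Htau _ (Cs n)); [exact HAC|].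
    apply ae_subset_of_subset; [exact HB|exact Htau|]. intros x Hx. exists n; exact Hx.
Qed.

Lemma quot_sigma_principal_principal : quot_sigma_principal B tau -> sigma_principal B tau.
Proof.
  intros Hq I HI.
  destruct (Hq _ (classes_below_sigma_ideal I HI)) as [l Hl].
  destruct (quot_inhabited l) as [L HlL].
  assert (Hbelow : classes_below I l).
  { apply Hl. apply (qle_of_ae_subset _ _ L L HlL HlL), ae_subset_refl; assumption. }
  destruct Hbelow as [A [C [HlA [HIC HAC]]]].
  exists C. split; [exact HIC|]. intros S HIS.
  pose proof (proj1 HI S HIS) as HBS.
  apply (ae_subset_trans B tau HB Htau _ L);
    [|apply (ae_subset_trans B tau HB Htau _ A); [exact (quot_mem_ae l L A HlL HlA)|exact HAC]].
  apply (qle_ae_subset _ _ _ _ (proj1 (Hl _) (classes_below_class I S HBS HIS)));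
    [apply class_of_mem|exact HlL].
Qed.

End Quotient.

Theorem mainTheorem5 (E : Type) (HE : inhabited E)
  (B : (E -> Prop) -> Prop) (tau : (E -> Prop) -> ereal)
  (HB : sigma_algebra B) (Htau : sigma_maxitive B tau) :
  (sigma_principal B tau <-> ccc B tau) /\
  (ccc B tau <-> quot_sigma_principal B tau) /\
  (quot_sigma_principal B tau <->
     exists m : (E -> Prop) -> ereal,
       sigma_additive B m /\ sigma_principal B m /\
       forall A, B A -> (m A = ezero <-> tau A = ezero)).
Proof.
  pose proof (sigma_principal_ccc E B tau HB) as H12.
  pose proof (ccc_sigma_principal E B tau HB Htau) as H21.
  pose proof (sigma_principal_quot E B tau HB Htau) as H13.
  pose proof (quot_sigma_principal_principal E B tau HB Htau) as H31.
  pose proof (sigma_principal_iff_additive_version B tau Htau) as H14.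
  split; [|split]; split; intro H.
  - exact (H12 H).
  - exact (H21 H).
  - exact (H13 (H21 H)).
  - exact (H12 (H31 H)).
  - exact (proj1 H14 (H31 H)).
  - exact (H13 (proj2 H14 H)).
Qed.
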